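(* Consider the centralized caching problem with uncoded prefetching with $N$ files, $K$ users, and local cache size of $M$ files per user, $t=KM/N$. For every file size $F$, every $\epsilon>0$, and every statistics $\boldsymbol{s}$, $$\min_{\boldsymbol{\mathcal{M}}}R^*_\epsilon(\boldsymbol{s},\boldsymbol{\mathcal{M}})\ \ge\ \mathrm{Conv}\left(\frac{\binom{K}{t+1}-\binom{K-N_{\mathrm{e}}(\boldsymbol{s})}{t+1}}{\binom{K}{t}}\right)-\left(\frac{1}{F}+N_{\mathrm{e}}^2(\boldsymbol{s})\epsilon\right),$$ where the minimum is over all uncoded prefetchings satisfying the memory constraint and $\mathrm{Conv}(f(t))$ denotes the lower convex envelope of the points $\{(t,f(t)):t\in\{0,1,\dots,K\}\}$, evaluated at $t=KM/N$.
   Context: Setting: $N$ files $W_1,\dots,W_N$ of $F$ bits each, all bits i.i.d. Bernoulli$(1/2)$; $K$ users each with $MF$ bits of cache, $M\in[0,N]$. An uncoded prefetching $\boldsymbol{\mathcal{M}}=(\mathcal{M}_1,\dots,\mathcal{M}_K)$: each $\mathcal{M}_k$ is a set of at most $MF$ bit indices and user $k$ stores those bits. For a demand $\boldsymbol{d}\in\{1,\dots,N\}^K$, a rate $R$ is $\epsilon$-achievable if there are an encoder $X=\psi(W_1,\dots,W_N)\in\{0,1\}^{RF}$ and decoders such that each user $k$ recovers $W_{d_k}$ from $X$ and its cached bits with error probability at most $\epsilon$; $R^*_\epsilon(\boldsymbol{d},\boldsymbol{\mathcal{M}})$ is the minimum such rate. The statistics $\boldsymbol{s}(\boldsymbol{d})$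 of a demand is the length-$N$ array, sorted in nonincreasing order, whose $i$-th entry is the number of users requesting the $i$-th most requested file; the type $\mathcal{D}_{\boldsymbol{s}}$ is the set of demands with statistics $\boldsymbol{s}$; $N_{\mathrm{e}}(\boldsymbol{s})$ is the number of distinct files requested by any demand in $\mathcal{D}_{\boldsymbol{s}}$ (number of nonzero entries of $\boldsymbol{s}$). $R^*_\epsilon(\boldsymbol{s},\boldsymbol{\mathcal{M}})=\frac{1}{|\mathcal{D}_{\boldsymbol{s}}|}\sum_{\boldsymbol{d}\in\mathcal{D}_{\boldsymbol{s}}}R^*_\epsilon(\boldsymbol{d},\boldsymbol{\mathcal{M}})$. Convention: $\binom{n}{k}=0$ when $k>n$. *)

From HB Require Import structures.
From mathcomp Require Import all_boot all_order all_algebra.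
From mathcomp Require Import boolp classical_sets reals.
Set Implicit Arguments. Unset Strict Implicit. Unset Printing Implicit Defensive.
Import Order.TTheory GRing.Theory Num.Theory.
Local Open Scope ring_scope.
Local Open Scope classical_set_scope.

(* Bit positions: (file index, bit index within the file). *)
Definition bitpos (N F : nat) := ('I_N * 'I_F)%type.
Definition library (N F : nat) := {ffun bitpos N F -> bool}.
Definition file (N F : nat) (W : library N F) (n : 'I_N) : {ffun 'I_F -> bool} :=
  [ffun j => W (n, j)].

(* Uncoded prefetching: user k stores the bits indexed by Mp k. *)
Definition prefetching (N F K : nat) := {ffun 'I_K -> {set bitpos N F}}.
Definition mem_ok (R : realType) (N F K : nat) (M : R) (Mp : prefetching N F K) :=
  forall k, (#|Mp k|%:R : R) <= M * F%:R.
(* Content of user k's cache: the stored bits (others masked to false). *)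
Definition cache (N F K : nat) (Mp : prefetching N F K) (k : 'I_K) (W : library N F)
  : library N F := [ffun b => (b \in Mp k) && W b].

Definition demand (N K : nat) := {ffun 'I_K -> 'I_N}.

(* Error probability of user k under i.i.d. Bernoulli(1/2) bits,
   i.e. under the uniform distribution on all libraries. *)
Definition err_prob (R : realType) (N F K L : nat) (d : demand N K)
  (Mp : prefetching N F K)
  (enc : library N F -> {ffun 'I_L -> bool})
  (dec : 'I_K -> {ffun 'I_L -> bool} -> library N F -> {ffun 'I_F -> bool})
  (k : 'I_K) : R :=
  (#|[set W : library N F | dec k (enc W) (cache Mp k W) != file W (d k)]|%:R)
  / (#|{: library N F}|%:R).

Definition achievable (R : realType) (N F K : nat) (eps : R) (d : demand N K)
  (Mp : prefetching N F K) (L : nat) : Prop :=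
  exists (enc : library N F -> {ffun 'I_L -> bool})
         (dec : 'I_K -> {ffun 'I_L -> bool} -> library N F -> {ffun 'I_F -> bool}),
    forall k, err_prob R d Mp enc dec k <= eps.

Definition Rstar (R : realType) (N F K : nat) (eps : R) (d : demand N K)
  (Mp : prefetching N F K) : R :=
  inf [set r : R | exists L, achievable eps d Mp L /\ r = L%:R / F%:R].

Definition stats (N K : nat) (d : demand N K) : seq nat :=
  sort geq [seq #|[set k | d k == n]| | n <- enum 'I_N].

Definition dtype (N K : nat) (s : seq nat) : {set demand N K} :=
  [set d | stats d == s].

Definition Ne (s : seq nat) : nat := count (fun x => 0 < x)%N s.

Definition Rstar_s (R : realType) (N F K : nat) (eps : R) (s : seq nat)
  (Mp : prefetching N F K) : R :=
  (#|dtype N K s|%:R)^-1 * \sum_(d in dtype N K s) Rstar eps d Mp.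

Definition Rstar_min (R : realType) (N F K : nat) (M eps : R) (s : seq nat) : R :=
  inf [set r : R | exists Mp : prefetching N F K, mem_ok M Mp /\ r = Rstar_s eps s Mp].

(* Lower convex envelope of the points {(t, f t) : t = 0..K}, evaluated at x:
   the lowest ordinate of the convex hull of these points above abscissa x. *)
Definition lconv (R : realType) (K : nat) (f : nat -> R) (x : R) : R :=
  inf [set y : R | exists lam : 'I_K.+1 -> R,
         (forall i, 0 <= lam i) /\ \sum_i lam i = 1 /\
         \sum_i lam i * (i : nat)%:R = x /\ y = \sum_i lam i * f i].

Definition lb_fun (R : realType) (K ne : nat) (t : nat) : R :=
  (('C(K, t.+1)%:R - 'C(K - ne, t.+1)%:R) / 'C(K, t)%:R).

From mathcomp Require Import all_boot all_order all_algebra all_fingroup.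
From mathcomp Require Import boolp classical_sets reals.
From mathcomp Require Import zify ring lra.
Import Order.TTheory GRing.Theory Num.Theory.
Local Open Scope ring_scope.

Set Implicit Arguments. Unset Strict Implicit. Unset Printing Implicit Defensive.

(* Fix a demand [d] of type [s] and an ordering [u] of one user per requested
   file. A genie revealing every bit outside [genie_bits] lets [u 0], [u 1], ...
   decode in turn, since whatever [u j] caches is either revealed or a bit of a
   file already decoded. Hence the set of libraries decoded correctly by all of
   them, of probability at least [1 - ne * eps], injects into transmissions times
   revealed bits, and the rate is at least [|genie_bits| / F - 1/F - ne^2 eps].
   Averaging over the orderings and over the demands of type [s], a bit cached by
   exactly the users in [S] is a genie bit with a weight that, by symmetry in
   files and in users, depends on [|S|] only; double counting and the
   hockey-stick identity identify it with [|D_s| lb_fun |S| / N]. The memory constraint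
   bounds the mean of [|S|] over all bits by [K M / N], and mixing the
   distribution of [|S|] with the point [K], where [lb_fun] vanishes, bounds the
   lower convex envelope. *)

Lemma card_mkset (T : finType) (P : pred T) :
  #|[set x | P x]%classic| = #|[set x | P x]|.
Proof. by apply: eq_card => x; rewrite inE; apply/idP/idP; rewrite inE. Qed.

Lemma card_bigcup_le (I T : finType) (A : I -> {set T}) :
  (#|\bigcup_i A i| <= \sum_i #|A i|)%N.
Proof.
elim/big_rec2: _ => [|i n U _ IH]; first by rewrite cards0.
by rewrite (leq_trans (leq_card_setU _ _)) // leq_add2l.
Qed.

Lemma card_bitpos N F : #|{: bitpos N F}| = (N * F)%N.
Proof. by rewrite card_prod !card_ord. Qed.

Lemma card_library N F : #|{: library N F}| = (2 ^ (N * F))%N.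
Proof. by rewrite card_ffun card_bool card_prod !card_ord. Qed.

Lemma card_file_bits N F (n : 'I_N) : #|[set b : bitpos N F | b.1 == n]| = F.
Proof.
have -> : [set b : bitpos N F | b.1 == n] = finset.setX [set n] [set: 'I_F].
  by apply/setP => -[x y]; rewrite !inE andbT.
by rewrite cardsX cards1 cardsT card_ord mul1n.
Qed.

Lemma sum_indicator (R : pzSemiRingType) (T : finType) (P Q : pred T) :
  \sum_(x | P x) (Q x)%:R = #|[set x | P x & Q x]|%:R :> R.
Proof.
rewrite -sum1dep_card natr_sum big_mkcond [RHS]big_mkcond /=.
by apply: eq_bigr => x _; case: (P x); case: (Q x).
Qed.

Lemma card_disjoint_draws (T : finType) (U : {set T}) t :
  #|[set A : {set T} | #|A| == t & [disjoint A & U]]| = 'C(#|T| - #|U|, t).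
Proof.
have -> : [set A : {set T} | #|A| == t & [disjoint A & U]] =
          [set A : {set T} | A \subset ~: U & #|A| == t].
  by apply/finset.setP => A; rewrite !inE finset.disjoints_subset andbC.
by rewrite cards_draws -(cardsC U) addKn.
Qed.

Lemma sum_by_fibers (R : pzSemiRingType) (T : finType) K (c : T -> nat) (h : nat -> R) :
  (forall x, c x <= K)%N ->
  \sum_(i < K.+1) #|[set x | c x == i]|%:R * h i = \sum_x h (c x).
Proof.
move=> cK; under eq_bigr => i _ do rewrite -sum1dep_card natr_sum mulr_suml.
rewrite (exchange_big_dep xpredT) //=; apply: eq_bigr => x _.
by rewrite (big_pred1 (Ordinal (cK x : c x < K.+1)%N)) ?mul1r // => i; rewrite -val_eqE eq_sym.
Qed.

Lemma mean_subr_le (R : numFieldType) (T : finType) (I : {set T}) (a b : T -> R) (c : R) :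
  (0 < #|I|)%N -> (forall i, i \in I -> a i - c <= b i) ->
  #|I|%:R^-1 * \sum_(i in I) a i - c <= #|I|%:R^-1 * \sum_(i in I) b i.
Proof.
move=> I_gt0 le_ab; have n_gt0 : (0 : R) < #|I|%:R by rewrite ltr0n.
rewrite -(ler_pM2l n_gt0) mulrBr !mulrA mulfV ?gt_eqF // !mul1r.
have : \sum_(i in I) (a i - c) <= \sum_(i in I) b i by apply: ler_sum.
by rewrite sumrB sumr_const mulr_natl.
Qed.

Lemma mean_const (R : numFieldType) (T : finType) (I : {set T}) (r : R) :
  (0 < #|I|)%N -> #|I|%:R^-1 * \sum_(i in I) r = r.
Proof.
by move=> I_gt0; rewrite sumr_const -[r *+ _]mulr_natl mulrA mulVf ?mul1r // pnatr_eq0 -lt0n.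
Qed.

(* Linearizes the counting bound [(1 - ne * eps) 2^|genie_bits| <= 2^L]; the
   [- 1] becomes the [1/F] loss of the theorem. *)
Lemma lin_le_of_exp2_le (R : realFieldType) (a : R) (A L : nat) :
  a <= 1 -> a * 2 ^+ A <= 2 ^+ L -> a * A%:R - 1 <= L%:R.
Proof.
move=> a_le1 h.
have [AL|LA] := leqP A L.
  have : a * A%:R <= A%:R by rewrite -[leRHS]mul1r ler_wpM2r.
  have : (A%:R : R) <= L%:R by rewrite ler_nat.
  lra.
have [a_le0|a_gt0] := lerP a 0.
  have : a * A%:R <= 0 by rewrite mulr_le0_ge0.
  have : (0 : R) <= L%:R by [].
  lra.
have [m eA] : exists m, A = (m + L)%N by exists (A - L)%N; rewrite subnK // ltnW.
have A_le : (A%:R : R) <= L.+1%:R * 2 ^+ m.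
  rewrite -natrX -natrM ler_nat.
  have := ltn_expl m (isT : (1 < 2)%N); rewrite eA; move: (2 ^ m)%N => X; nia.
have a2m : a * 2 ^+ m <= 1.
  by rewrite eA exprD mulrA -[leRHS]mul1r ler_pM2r ?exprn_gt0 in h.
have : a * A%:R <= L.+1%:R * (a * 2 ^+ m).
  by rewrite mulrCA ler_wpM2l ?(ltW a_gt0).
have : L.+1%:R * (a * 2 ^+ m) <= L.+1%:R by rewrite ler_piMr.
rewrite -addn1 natrD; lra.
Qed.

Section Genie.
Variables (N F K : nat) (Mp : prefetching N F K) (d : demand N K) (ne : nat)
  (u : 'I_ne -> 'I_K).

Definition cachers (b : bitpos N F) : {set 'I_K} := [set k | b \in Mp k].

Definition users_upto (j : 'I_ne) : {set 'I_K} := [set u i | i : 'I_ne & (i <= j)%N].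

Lemma card_users_upto j : injective u -> #|users_upto j| = j.+1.
Proof.
move=> u_inj; rewrite card_imset //.
have widen_inj : injective (widen_ord (ltn_ord j)) by move=> x y /(congr1 val) /= /val_inj.
rewrite -[RHS](card_ord j.+1) -(card_imset _ widen_inj); apply: eq_card => i.
apply/idP/imsetP => [|[k _ ->]]; rewrite inE; last by rewrite /= -ltnS.
by move=> ij; exists (Ordinal (ij : (i < j.+1)%N)) => //; apply: val_inj.
Qed.

Definition genie_bits : {set bitpos N F} :=
  [set b | [exists j, (b.1 == d (u j)) && [disjoint cachers b & users_upto j]]].

Lemma genie_bit_cached_before b j :
  b \in genie_bits -> b \in Mp (u j) -> exists2 i : 'I_ne, (i < j)%N & b.1 = d (u i).
Proof.
rewrite inE => /existsP [i /andP [/eqP b1 dis]] bM; exists i => //.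
rewrite ltnNge; apply/negP => ji.
have uj_upto : u j \in users_upto i by apply/imsetP; exists j; rewrite ?inE.
by move/disjointFr: dis => /(_ (u j)); rewrite inE bM uj_upto => /(_ isT).
Qed.

Lemma card_genie_bits_le : (#|genie_bits| <= ne * F)%N.
Proof.
have sub : genie_bits \subset \bigcup_(j < ne) [set b : bitpos N F | b.1 == d (u j)].
  apply/fintype.subsetP => b; rewrite inE => /existsP [j /andP [b1 _]].
  by apply/bigcupP; exists j; rewrite ?inE.
apply: leq_trans (subset_leq_card sub) (leq_trans (card_bigcup_le _) _).
by rewrite (eq_bigr (fun=> F)) => [|j _]; rewrite ?sum_nat_const ?card_ord ?card_file_bits.
Qed.

Lemma card_genie_bitsE :
  injective (fun i => d (u i)) ->
  #|genie_bits| = (\sum_(b : bitpos N F) \sum_(j < ne)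
      ((b.1 == d (u j)) && [disjoint cachers b & users_upto j]))%N.
Proof.
move=> du_inj; rewrite -sum1_card big_mkcond /=; apply: eq_bigr => b _.
rewrite inE; case: existsP => [[j /andP [/eqP b1 dis]]|none]; last first.
  by rewrite big1 // => j _; case: andP => // ?; case: none; exists j; apply/andP.
rewrite (bigD1 j) ?b1 ?eqxx ?dis //= big1 ?addn0 // => i ij.
by case: andP => // -[/eqP bi _]; case/negP: ij; apply/eqP/du_inj; rewrite /= -b1 -bi.
Qed.

Variables (L : nat) (enc : library N F -> {ffun 'I_L -> bool})
  (dec : 'I_K -> {ffun 'I_L -> bool} -> library N F -> {ffun 'I_F -> bool}).

Definition decoded : {set library N F} :=
  [set W | [forall j, dec (u j) (enc W) (cache Mp (u j) W) == file W (d (u j))]].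

Definition genie_info (W : library N F) : library N F :=
  [ffun b => (b \notin genie_bits) && W b].

Lemma decoded_inj : {in decoded &, injective (fun W => (enc W, genie_info W))}.
Proof.
move=> W W'; rewrite !inE => /forallP dW /forallP dW' [eenc einfo].
have off b : b \notin genie_bits -> W b = W' b.
  by move=> bA; move/ffunP/(_ b): einfo; rewrite !ffunE bA.
have files j : file W (d (u j)) = file W' (d (u j)).
  have [n] := ubnP (nat_of_ord j); elim: n j => // n IH j; rewrite ltnS => jn.
  have ecache : cache Mp (u j) W = cache Mp (u j) W'.
    apply/ffunP => b; rewrite !ffunE; case bM: (b \in Mp (u j)) => //=.
    have [bA|/off //] := boolP (b \in genie_bits).
    have [i ij b1] := genie_bit_cached_before bA bM.
    move/ffunP/(_ b.2): (IH i (leq_trans ij jn)).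
    by rewrite !ffunE -b1 -surjective_pairing.
  by rewrite -(eqP (dW j)) -(eqP (dW' j)) eenc ecache.
apply/ffunP => b; have [|/off //] := boolP (b \in genie_bits).
rewrite inE => /existsP [j /andP [/eqP b1 _]].
by move/ffunP/(_ b.2): (files j); rewrite !ffunE -b1 -surjective_pairing.
Qed.

Lemma card_decoded_le : (#|decoded| <= 2 ^ L * 2 ^ (N * F - #|genie_bits|))%N.
Proof.
rewrite -(card_in_imset decoded_inj).
have -> : (N * F - #|genie_bits| = #|~: genie_bits|)%N.
  by rewrite -card_bitpos -(cardsC genie_bits) addKn.
set P := pffun_on false (~: genie_bits) (predT : {pred bool}).
have -> : (2 ^ #|~: genie_bits| = #|[set V : library N F | V \in P]|)%N.
  rewrite (@eq_card _ _ P) => [|V]; last by rewrite inE.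
  by rewrite card_pffun_on -card_bool; congr (_ ^ _)%N; apply: eq_card.
have -> : (2 ^ L = #|[set: {ffun 'I_L -> bool}]|)%N.
  by rewrite cardsT card_ffun card_bool card_ord.
rewrite -cardsX; apply: subset_leq_card; apply/fintype.subsetP => _ /imsetP [W _ ->].
rewrite !inE /=; apply/pffun_onP; split => //.
by apply/supportP => b; rewrite inE negbK => bA; rewrite ffunE bA.
Qed.

Lemma card_decoded_ge (R : realType) (eps : R) :
  (forall k, err_prob R d Mp enc dec k <= eps) ->
  (1 - ne%:R * eps) * 2 ^+ (N * F) <= #|decoded|%:R.
Proof.
move=> err_le.
pose fail k := [set W : library N F | dec k (enc W) (cache Mp k W) != file W (d k)].
have lib_gt0 : (0 : R) < 2 ^+ (N * F) by rewrite exprn_gt0.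
have fail_le k : (#|fail k|%:R : R) <= eps * 2 ^+ (N * F).
  by move: (err_le k); rewrite /err_prob card_mkset card_library natrX ler_pdivrMr.
have union_bound : (#|~: decoded|%:R : R) <= \sum_(j < ne) #|fail (u j)|%:R.
  rewrite -natr_sum ler_nat; apply: leq_trans (card_bigcup_le _).
  apply/subset_leq_card/fintype.subsetP => W; rewrite !inE negb_forall => /existsP [j dj].
  by apply/bigcupP; exists j; rewrite ?inE.
have := le_trans union_bound (ler_sum _ (fun j _ => fail_le (u j))).
have card_split : #|decoded|%:R + #|~: decoded|%:R = 2 ^+ (N * F) :> R.
  by rewrite -natrD cardsC card_library natrX.
rewrite sumr_const card_ord -mulr_natl; lra.
Qed.

Lemma genie_rate_bound (R : realType) (eps : R) :
  0 <= eps -> (forall k, err_prob R d Mp enc dec k <= eps) ->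
  (1 - ne%:R * eps) * #|genie_bits|%:R - 1 <= L%:R.
Proof.
move=> eps_ge0 err_le; apply: lin_le_of_exp2_le.
  by rewrite lerBlDr lerDl mulr_ge0.
have A_le : (#|genie_bits| <= N * F)%N.
  by rewrite -card_bitpos max_card.
have decoded_le : (#|decoded|%:R : R) <= 2 ^+ L * 2 ^+ (N * F - #|genie_bits|).
  by rewrite -!natrX -natrM ler_nat card_decoded_le.
have split_lib : (2 ^+ (N * F) : R) = 2 ^+ #|genie_bits| * 2 ^+ (N * F - #|genie_bits|).
  by rewrite -exprD subnKC.
have := le_trans (card_decoded_ge err_le) decoded_le.
by rewrite split_lib mulrA ler_pM2r ?exprn_gt0.
Qed.

End Genie.

Lemma achievable_uncoded (R : realType) N F K (eps : R) (d : demand N K)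
    (Mp : prefetching N F K) :
  0 <= eps -> achievable eps d Mp #|{: bitpos N F}|.
Proof.
move=> eps_ge0.
exists (fun W => [ffun i : 'I_#|{: bitpos N F}| => W (enum_val i)]).
exists (fun k X _ => [ffun j => X (enum_rank (d k, j))]).
move=> k; rewrite /err_prob card_mkset (_ : #|_| = 0%N) ?mul0r //.
apply/eqP; rewrite cards_eq0; apply/eqP/finset.setP => W.
rewrite !inE; apply/negbTE; rewrite negbK.
by apply/eqP/ffunP => j; rewrite !ffunE enum_rankK.
Qed.

Lemma Rstar_ge_genie_bits (R : realType) N F K (eps : R) (d : demand N K)
    (Mp : prefetching N F K) ne (u : 'I_ne -> 'I_K) :
  (0 < F)%N -> 0 < eps ->
  #|genie_bits Mp d u|%:R / F%:R - (F%:R^-1 + ne%:R ^+ 2 * eps) <= Rstar eps d Mp.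
Proof.
move=> F_gt0 eps_gt0; apply: lb_le_inf.
  exists (#|{: bitpos N F}|%:R / F%:R), #|{: bitpos N F}|.
  by split => //; apply/achievable_uncoded/ltW.
move=> _ [L [[enc [dec err_le]] ->]].
have F_pos : (0 : R) < F%:R by rewrite ltr0n.
have rate := genie_rate_bound u (ltW eps_gt0) err_le.
set A := (#|genie_bits Mp d u|%:R : R) in rate *.
have A_le : A <= ne%:R * F%:R by rewrite -natrM ler_nat card_genie_bits_le.
have e_ge0 : 0 <= ne%:R * eps by apply: mulr_ge0 (ler0n _ _) (ltW eps_gt0).
have : A - 1 - ne%:R ^+ 2 * eps * F%:R <= L%:R.
  have : ne%:R * eps * A <= ne%:R * eps * (ne%:R * F%:R) by rewrite ler_wpM2l.
  rewrite expr2; lra.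
have -> : A / F%:R - (F%:R^-1 + ne%:R ^+ 2 * eps) =
          (A - 1 - ne%:R ^+ 2 * eps * F%:R) / F%:R.
  by field; rewrite gt_eqF.
by rewrite ler_pM2r ?invr_gt0.
Qed.

Lemma statsE N K (d : demand N K) :
  stats d = sort geq [seq #|[set k | d k == n]| | n <- enum 'I_N].
Proof. by congr sort; apply: eq_map => n; rewrite card_mkset. Qed.

Lemma sort_geq_perm_eq (s1 s2 : seq nat) : perm_eq s1 s2 -> sort geq s1 = sort geq s2.
Proof.
move=> s12; apply/perm_sortP => // [m n|m n p|m n] /=; [exact: leq_total | lia | lia].
Qed.

Lemma stats_relabel_users N K (d : demand N K) (p : {perm 'I_K}) :
  stats [ffun k => d (p k)] = stats d.
Proof.
rewrite !statsE; congr sort; apply: eq_map => n.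
rewrite -(card_imset _ (@perm_inj _ p)); apply: eq_card => k.
by rewrite -[k](permKV p) mem_imset ?inE ?ffunE //; exact: perm_inj.
Qed.

Lemma stats_relabel_files N K (d : demand N K) (p : {perm 'I_N}) :
  stats [ffun k => p (d k)] = stats d.
Proof.
rewrite !statsE; apply: sort_geq_perm_eq.
have -> : [seq #|[set k | [ffun k => p (d k)] k == n]| | n <- enum 'I_N] =
          [seq #|[set k | d k == n]| | n <- map p^-1%g (enum 'I_N)].
  rewrite -[in RHS]map_comp; apply: eq_map => n /=; apply: eq_card => k.
  by rewrite !inE ffunE -{1}(permKV p n) (inj_eq perm_inj).
apply/perm_map/uniq_perm; rewrite ?enum_uniq ?(map_inj_uniq perm_inj) ?enum_uniq //.
by move=> n; rewrite mem_enum; apply/mapP; exists (p n); rewrite ?mem_enum ?permK.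
Qed.

Definition requested N K (d : demand N K) : {set 'I_N} := [set d k | k in 'I_K].

Lemma Ne_stats N K (d : demand N K) : Ne (stats d) = #|requested d|.
Proof.
rewrite /Ne statsE.
have /permEl/seq.permP -> := perm_sort geq [seq #|[set k | d k == n]| | n <- enum 'I_N].
rewrite count_map cardE /enum_mem size_filter -enumT.
rewrite (@eq_filter _ _ predT) // filter_predT; apply: eq_count => n /=.
rewrite card_gt0; apply/set0Pn/imsetP => [[k]|[k _ ->]]; last by exists k; rewrite inE.
by rewrite inE => /eqP <-; exists k.
Qed.

Lemma perm_imset_of_card K (S S' : {set 'I_K}) :
  #|S| = #|S'| -> exists p : {perm 'I_K}, p @: S = S'.
Proof.
move=> cS.
pose lineup (X : {set 'I_K}) := enum X ++ enum (~: X).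
have lineupP X : [/\ uniq (lineup X), size (lineup X) = K & forall x, x \in lineup X].
  split.
  - rewrite cat_uniq !enum_uniq andbT /=; apply/hasPn => x.
    by rewrite !mem_enum inE => ->.
  - by rewrite size_cat -!cardE cardsC card_ord.
  - by move=> x; rewrite mem_cat !mem_enum inE orbN.
have [ua sa ma] := lineupP S; have [ub sb mb] := lineupP S'.
set a := lineup S in ua sa ma *; set b := lineup S' in ub sb mb *.
have eab : size b = size a by rewrite sa sb.
pose f x := nth x b (index x a); pose g y := nth y a (index y b).
have fK : cancel f g by move=> x; rewrite /f /g index_uniq ?nth_index // eab index_mem.
exists (perm (can_inj fK)).
have fS : f @: S \subset S'.
  apply/fintype.subsetP => _ /imsetP [x xS ->].
  have ix : (index x a < #|S|)%N.
    by rewrite /a /lineup index_cat mem_enum xS [#|S|]cardE index_mem mem_enum.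
  by rewrite /f nth_cat -cardE -cS ix -mem_enum mem_nth // -cardE -cS.
have -> : perm (can_inj fK) @: S = f @: S by apply: eq_imset => x; rewrite permE.
by apply/eqP; rewrite eqEcard fS (card_imset _ (can_inj fK)) cS leqnn.
Qed.

Section Symmetrization.
Variables (R : numFieldType) (N K : nat) (s : seq nat) (ne : nat).

Definition orderings (d : demand N K) : {set {ffun 'I_ne -> 'I_K}} :=
  [set u : {ffun 'I_ne -> 'I_K} | injectiveb (fun i => d (u i))].

(* How often a bit of file [n] cached by exactly the users in [S] is a genie
   bit: summed over the demands of type [s], averaged over their orderings. *)
Definition genie_weight (n : 'I_N) (S : {set 'I_K}) : R :=
  \sum_(d in dtype N K s) #|orderings d|%:R^-1 * \sum_(u in orderings d)
    \sum_(j < ne) ((n == d (u j)) && [disjoint S & users_upto u j])%:R.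

Definition avoiding_prefixes (S : {set 'I_K}) : R :=
  \sum_(d in dtype N K s) #|orderings d|%:R^-1 * \sum_(u in orderings d)
    \sum_(j < ne) [disjoint S & users_upto u j]%:R.

Lemma genie_weight_relabel (p : {perm 'I_N}) n S :
  genie_weight (p n) S = genie_weight n S.
Proof.
have h_inj : injective (fun d : demand N K => [ffun k => p (d k)]).
  by move=> d1 d2 /ffunP e; apply/ffunP => k; move: (e k); rewrite !ffunE => /perm_inj.
rewrite /genie_weight (reindex_inj h_inj); apply: eq_big => [d|d _].
  by rewrite !inE stats_relabel_files.
have -> : orderings [ffun k => p (d k)] = orderings d.
  apply/finset.setP => u; rewrite !inE.
  by apply/injectiveP/injectiveP => inj i j e; apply: inj; move: e; rewrite /= !ffunE;
    [move-> | move/perm_inj].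
congr (_ * _); apply: eq_bigr => u _; apply: eq_bigr => j _.
by rewrite ffunE (inj_eq perm_inj).
Qed.

Lemma sum_genie_weight S : \sum_n genie_weight n S = avoiding_prefixes S.
Proof.
rewrite /genie_weight exchange_big; apply: eq_bigr => d _.
rewrite -mulr_sumr exchange_big; congr (_ * _); apply: eq_bigr => u _.
rewrite exchange_big; apply: eq_bigr => j _.
by rewrite (bigD1 (d (u j))) //= eqxx big1 ?addr0 // => n /negbTE ->.
Qed.

Lemma genie_weightE n S : (0 < N)%N -> genie_weight n S = avoiding_prefixes S / N%:R.
Proof.
move=> N_gt0; rewrite -sum_genie_weight (eq_bigr (fun=> genie_weight n S)).
  by rewrite sumr_const card_ord -[_ *+ N]mulr_natr mulfK // pnatr_eq0 -lt0n.
by move=> n' _; rewrite -(tpermR n n') genie_weight_relabel.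
Qed.

Lemma orderings_relabel (p : {perm 'I_K}) (d : demand N K) :
  orderings [ffun k => d (p^-1%g k)] =
  [set [ffun i => p (u i)] | u : {ffun 'I_ne -> 'I_K} in orderings d].
Proof.
apply/finset.setP => v; apply/idP/imsetP => [|[u + ->]]; rewrite !inE => /injectiveP inj.
  exists [ffun i => p^-1%g (v i)]; last by apply/ffunP => i; rewrite !ffunE permKV.
  by rewrite inE; apply/injectiveP => i j e; apply: inj; move: e; rewrite /= !ffunE.
by apply/injectiveP => i j e; apply: inj; move: e; rewrite /= !ffunE !permK.
Qed.

Lemma avoiding_prefixes_relabel (p : {perm 'I_K}) (S : {set 'I_K}) :
  avoiding_prefixes (p @: S) = avoiding_prefixes S.
Proof.
have h_inj : injective (fun d : demand N K => [ffun k => d (p^-1%g k)]).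
  by move=> d1 d2 /ffunP e; apply/ffunP => k; move: (e (p k)); rewrite !ffunE permK.
have pu_inj : injective (fun u : {ffun 'I_ne -> 'I_K} => [ffun i => p (u i)]).
  by move=> u1 u2 /ffunP e; apply/ffunP => i; move: (e i); rewrite !ffunE => /perm_inj.
rewrite /avoiding_prefixes (reindex_inj h_inj); apply: eq_big => [d|d _].
  by rewrite !inE (stats_relabel_users d p^-1%g).
rewrite orderings_relabel (card_imset _ pu_inj) big_imset /=; last by move=> ? ? _ _ /pu_inj.
congr (_ * _); apply: eq_bigr => u _; apply: eq_bigr => j _.
have -> : users_upto [ffun i => p (u i)] j = p @: users_upto u j.
  by rewrite /users_upto -imset_comp; apply: eq_imset => i; rewrite /= ffunE.
by rewrite imset_disjoint //; apply: perm_inj.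
Qed.

(* Double counting over all caching sets of the same size as [S]. *)
Lemma avoiding_prefixes_val (S : {set 'I_K}) :
  (forall d, d \in dtype N K s -> (0 < #|orderings d|)%N) ->
  'C(K, #|S|)%:R * avoiding_prefixes S =
  #|dtype N K s|%:R * (\sum_(j < ne) 'C(K - j.+1, #|S|))%:R.
Proof.
move=> orderings_gt0; set t := #|S|.
have same_size : \sum_(S' : {set 'I_K} | #|S'| == t) avoiding_prefixes S' =
                 'C(K, t)%:R * avoiding_prefixes S.
  rewrite (eq_bigr (fun=> avoiding_prefixes S)) => [|S' /eqP cS'].
    rewrite sumr_const mulr_natl; congr (_ *+ _).
    by rewrite -[in RHS](card_ord K) -card_draws; apply: eq_card => A; rewrite inE.
  have [p <-] := perm_imset_of_card (esym cS'); exact: avoiding_prefixes_relabel.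
rewrite -same_size /avoiding_prefixes exchange_big /= [RHS]mulr_natl.
rewrite -(sumr_const (mem (dtype N K s))); apply: eq_bigr => d dD.
rewrite -mulr_sumr exchange_big /=.
rewrite (eq_bigr (fun=> (\sum_(j < ne) 'C(K - j.+1, t))%:R)) => [|u].
  exact: mean_const (orderings_gt0 d dD).
rewrite inE => /injectiveP du_inj.
have u_inj : injective u by move=> i j e; apply: du_inj; rewrite /= e.
rewrite natr_sum exchange_big /=; apply: eq_bigr => j _.
by rewrite sum_indicator card_disjoint_draws card_ord card_users_upto.
Qed.

End Symmetrization.

Lemma orderings_nonempty N K ne (d : demand N K) :
  ne = #|requested d| -> (0 < #|orderings ne d|)%N.
Proof.
move=> ->; have pre (i : 'I_#|requested d|) : exists k, d k = enum_val i.
  by have /imsetP [k _ ->] := enum_valP i; exists k.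
have [g gK] := fin_all_exists pre.
apply/card_gt0P; exists [ffun i => g i]; rewrite inE.
by apply/injectiveP => i j; rewrite /= !ffunE !gK; apply: enum_val_inj.
Qed.

Lemma lb_fun_ge0 (R : realType) K ne t : 0 <= lb_fun R K ne t.
Proof. by rewrite divr_ge0 // subr_ge0 ler_nat leq_bin2l // leq_subr. Qed.

Lemma lb_fun_at_K (R : realType) K ne : lb_fun R K ne K = 0.
Proof.
by rewrite /lb_fun (@bin_small K) // (@bin_small (K - ne)) ?subrr ?mul0r // ltnS leq_subr.
Qed.

Lemma hockey_stick K ne t : (ne <= K)%N ->
  (\sum_(j < ne) 'C(K - j.+1, t) + 'C(K - ne, t.+1) = 'C(K, t.+1))%N.
Proof.
elim: ne => [|n IH] nK; first by rewrite big_ord0 subn0.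
rewrite big_ord_recr /= -addnA [('C(_, t) + _)%N]addnC -binS.
have -> : ((K - n.+1).+1 = K - n)%N by lia.
exact: IH (ltnW nK).
Qed.

Lemma lb_funE (R : realType) K ne t : (ne <= K)%N ->
  lb_fun R K ne t = (\sum_(j < ne) 'C(K - j.+1, t))%:R / 'C(K, t)%:R.
Proof. by move=> neK; rewrite /lb_fun -(hockey_stick t neK) natrD addrK. Qed.

Lemma genie_weight_lb_fun (R : realType) N K s ne (n : 'I_N) (S : {set 'I_K}) :
  (0 < N)%N -> (ne <= K)%N ->
  (forall d, d \in dtype N K s -> (0 < #|orderings ne d|)%N) ->
  genie_weight R s ne n S = #|dtype N K s|%:R / N%:R * lb_fun R K ne #|S|.
Proof.
move=> N_gt0 neK orderings_gt0.
have C_gt0 : (0 : R) < 'C(K, #|S|)%:R.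
  by rewrite ltr0n bin_gt0 (leq_trans (max_card _)) ?card_ord.
have := avoiding_prefixes_val R S orderings_gt0.
rewrite genie_weightE // lb_funE // => val.
have -> : avoiding_prefixes R N s ne S =
  #|dtype N K s|%:R * (\sum_(j < ne) 'C(K - j.+1, #|S|))%:R / 'C(K, #|S|)%:R.
  apply: (mulfI (lt0r_neq0 C_gt0)); rewrite val.
  by rewrite mulrCA mulfV ?mulr1 ?gt_eqF.
ring.
Qed.

Lemma convex_comb_between (R : realFieldType) (m x k : R) :
  m <= x -> x <= k -> exists th, [/\ 0 <= th, th <= 1 & (1 - th) * m + th * k = x].
Proof.
move=> m_le_x x_le_k; have [m_lt_k|k_le_m] := ltrP m k.
  exists ((x - m) / (k - m)); split.
  - by apply: divr_ge0; rewrite subr_ge0 // ltW.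
  - by rewrite ler_pdivrMr ?subr_gt0 // mul1r lerD2r.
  - by field; rewrite subr_eq0 gt_eqF.
exists 0; split => //; rewrite subr0 mul1r mul0r addr0.
by apply/eqP; rewrite eq_le m_le_x (le_trans x_le_k).
Qed.

(* Mixing [p] with the point [K], where [f] vanishes, moves the mean up to [x]. *)
Lemma lconv_le_mix (R : realType) K (f : nat -> R) (p : 'I_K.+1 -> R) (x : R) :
  (forall i, 0 <= f i) -> f K = 0 ->
  (forall i, 0 <= p i) -> \sum_i p i = 1 ->
  \sum_i p i * (i : nat)%:R <= x -> x <= K%:R ->
  lconv K f x <= \sum_i p i * f i.
Proof.
move=> f_ge0 fK p_ge0 p_sum1 m_le_x x_leK.
have [th [th_ge0 th_le1 thE]] := convex_comb_between m_le_x x_leK.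
pose lam i := (1 - th) * p i + th * (i == ord_max)%:R.
have lamE (g : nat -> R) : \sum_i lam i * g i = (1 - th) * \sum_i p i * g i + th * g K.
  rewrite /lam (eq_bigr (fun i => (1 - th) * (p i * g i) + th * ((i == ord_max)%:R * g i)));
    last by move=> i _; rewrite mulrDl !mulrA.
  rewrite big_split /= -!mulr_sumr; congr (_ + th * _).
  by rewrite (bigD1 ord_max) //= eqxx mul1r big1 ?addr0 // => i /negbTE ->; rewrite mul0r.
have S_ge0 : 0 <= \sum_i p i * f i by apply: sumr_ge0 => i _; apply: mulr_ge0.
apply: (@le_trans _ _ (\sum_i lam i * f i)).
  apply: ge_inf.
    by exists 0 => _ [l [l_ge0 [_ [_ ->]]]]; apply: sumr_ge0 => i _; apply: mulr_ge0.
  exists lam; split; first by move=> i; rewrite addr_ge0 ?mulr_ge0 ?subr_ge0.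
  have sum_mulr1 (q : 'I_K.+1 -> R) : \sum_i q i * 1 = \sum_i q i.
    by apply: eq_bigr => i _; rewrite mulr1.
  split; first by have := lamE (fun=> 1); rewrite /= !sum_mulr1 p_sum1 => ->; lra.
  by split => //; rewrite lamE.
by rewrite lamE fK mulr0 addr0 ler_piMl // lerBlDr lerDl.
Qed.

Lemma sum_card_cachers N F K (Mp : prefetching N F K) :
  (\sum_(b : bitpos N F) #|cachers Mp b| = \sum_(k < K) #|Mp k|)%N.
Proof.
rewrite (eq_bigr (fun b => \sum_(k < K) (b \in Mp k))%N) => [|b _]; last first.
  by rewrite -sum1_card big_mkcond; apply: eq_bigr => k _; rewrite inE; case: (_ \in _).
rewrite exchange_big /=; apply: eq_bigr => k _.
by rewrite -sum1_card [RHS]big_mkcond /=; apply: eq_bigr => b _; case: (_ \in _).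
Qed.

Lemma lconv_le_mean_cachers (R : realType) N F K (Mp : prefetching N F K) (M : R) ne :
  (0 < N)%N -> (0 < F)%N -> M <= N%:R -> mem_ok M Mp ->
  lconv K (lb_fun R K ne) (K%:R * M / N%:R) <=
  (N * F)%:R^-1 * \sum_(b : bitpos N F) lb_fun R K ne #|cachers Mp b|.
Proof.
move=> N_gt0 F_gt0 M_le mem_okMp.
have cK b : (#|cachers Mp b| <= K)%N by rewrite (leq_trans (max_card _)) ?card_ord.
have NF_gt0 : (0 : R) < (N * F)%:R by rewrite ltr0n muln_gt0 N_gt0.
pose p (i : 'I_K.+1) : R := (N * F)%:R^-1 * #|[set b | #|cachers Mp b| == i]|%:R.
have pE (h : nat -> R) : \sum_i p i * h i = (N * F)%:R^-1 * \sum_b h #|cachers Mp b|.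
  by rewrite -(sum_by_fibers _ cK) mulr_sumr; apply: eq_bigr => i _; rewrite mulrA.
rewrite -pE; apply: lconv_le_mix => //.
- exact: lb_fun_ge0.
- exact: lb_fun_at_K.
- by move=> i; apply: mulr_ge0; rewrite ?invr_ge0 ?(ltW NF_gt0).
- have := pE (fun=> 1); rewrite /= sumr_const card_bitpos mulVf ?gt_eqF // => <-.
  by apply: eq_bigr => i _; rewrite mulr1.
- rewrite (pE (fun i => i%:R)) -natr_sum sum_card_cachers natr_sum.
  have : \sum_(k < K) (#|Mp k|%:R : R) <= K%:R * (M * F%:R).
    apply: le_trans (ler_sum _ (fun k _ => mem_okMp k)) _.
    by rewrite sumr_const card_ord mulr_natl.
  have -> : K%:R * M / N%:R = (N * F)%:R^-1 * (K%:R * (M * F%:R)).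
    by rewrite natrM; field; rewrite !pnatr_eq0 -!lt0n F_gt0 N_gt0.
  by move=> ?; rewrite ler_wpM2l // invr_ge0 ltW.
- by rewrite ler_pdivrMr ?ltr0n // ler_wpM2l.
Qed.

Lemma mean_card_genie_bits (R : realType) N F K s ne (Mp : prefetching N F K) :
  (0 < N)%N -> (0 < #|dtype N K s|)%N -> (ne <= K)%N ->
  (forall d, d \in dtype N K s -> (0 < #|orderings ne d|)%N) ->
  #|dtype N K s|%:R^-1 * \sum_(d in dtype N K s) (#|orderings ne d|%:R^-1 *
     \sum_(u in orderings ne d) (#|genie_bits Mp d u|%:R / F%:R))
  = (N * F)%:R^-1 * \sum_(b : bitpos N F) lb_fun R K ne #|cachers Mp b|.
Proof.
move=> N_gt0 D_gt0 neK orderings_gt0.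
under eq_bigr do rewrite -mulr_suml mulrA.
rewrite -mulr_suml.
have -> : \sum_(d in dtype N K s) (#|orderings ne d|%:R^-1 *
      \sum_(u in orderings ne d) (#|genie_bits Mp d u|%:R : R)) =
    \sum_(b : bitpos N F) genie_weight R s ne b.1 (cachers Mp b).
  rewrite /genie_weight exchange_big /=; apply: eq_bigr => d _.
  rewrite -mulr_sumr; congr (_ * _); rewrite exchange_big /=; apply: eq_bigr => u.
  rewrite inE => /injectiveP du_inj.
  by rewrite card_genie_bitsE // natr_sum; apply: eq_bigr => b _; rewrite natr_sum.
under eq_bigr do rewrite genie_weight_lb_fun //.
rewrite -mulr_sumr !mulrA mulVf ?mul1r ?pnatr_eq0 -?lt0n // natrM invfM; ring.
Qed.

Lemma Ne_dtype N K s (d : demand N K) : d \in dtype N K s -> Ne s = #|requested d|.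
Proof. by rewrite inE => /eqP <-; apply: Ne_stats. Qed.

Theorem lemma2 (R : realType) (N K F : nat) (M eps : R) (s : seq nat) :
  (0 < N)%N -> (0 < K)%N -> (0 < F)%N ->
  0 <= M -> M <= N%:R -> 0 < eps ->
  (exists d : demand N K, stats d = s) ->
  @Rstar_min R N F K M eps s >=
    @lconv R K (lb_fun R K (Ne s)) (K%:R * M / N%:R)
    - (F%:R^-1 + (Ne s)%:R ^+ 2 * eps).
Proof.
move=> N_gt0 K_gt0 F_gt0 M_ge0 M_le eps_gt0 [d0 stats_d0].
set ne := Ne s; set c := F%:R^-1 + ne%:R ^+ 2 * eps.
have d0D : d0 \in dtype N K s by rewrite inE stats_d0.
have neK : (ne <= K)%N.
  by rewrite /ne (Ne_dtype d0D) (leq_trans (leq_imset_card _ _)) ?card_ord.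
have orderings_gt0 d : d \in dtype N K s -> (0 < #|orderings ne d|)%N.
  by move/Ne_dtype/orderings_nonempty.
have D_gt0 : (0 < #|dtype N K s|)%N by apply/card_gt0P; exists d0.
apply: lb_le_inf.
  pose no_cache : prefetching N F K := [ffun=> finset.set0].
  exists (Rstar_s eps s no_cache), no_cache; split => // k.
  by rewrite ffunE cards0 mulr_ge0.
move=> _ [Mp [mem_okMp ->]].
apply: le_trans (lerB (lconv_le_mean_cachers ne N_gt0 F_gt0 M_le mem_okMp) (lexx c)) _.
rewrite -(mean_card_genie_bits _ _ N_gt0 D_gt0 neK orderings_gt0).
apply: mean_subr_le => // d dD.
have := mean_subr_le (orderings_gt0 d dD) (fun u _ => Rstar_ge_genie_bits d Mp u F_gt0 eps_gt0).
by rewrite mean_const ?orderings_gt0.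
Qed.
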